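(* The free $\Gamma(Lev)$-algebra on one generator, $\Gamma(Lev,\mathbb F x)=\bigoplus_{n\ge1}(Lev(n)\otimes(\mathbb F x)^{\otimes n})^{\Sigma_n}$, is isomorphic as an $\mathbb F$-vector space to $\mathbb F[\mathrm{BHS}]$, the vector space spanned by the set of binary Huffman sequences.
   Context: $[n]=\{1,\dots,n\}$. $Lev$ is the linear operad spanned by the set operad $\mathscr L'$, where $\mathscr L'(n)$ ($n\ge1$) is the set of maps $h:[n]\to\mathbb N$ with $\sum_i2^{-h(i)}=1$, $\sigma\cdot h=h\circ\sigma^{-1}$, unit $1\mapsto0$ in $\mathscr L'(1)$, composition $\mu(h\otimes g_1\otimes\dots\otimes g_n)$ sending $m_1+\dots+m_{j-1}+t$ ($1\le t\le m_j$) to $h(j)+g_j(t)$; $Lev(0)=0$. $\Gamma(Lev)$ is Fresse's divided power monad $V\mapsto\bigoplus_n(Lev(n)\otimes V^{\otimes n})^{\Sigma_n}$, so $\Gamma(Lev,\mathbb F x)$ is the free $\Gamma(Lev)$-algebra on a one-dimensional space $\mathbb F x$. $\mathrm{BHS}=\bigsqcup_{n\ge1}\{u\in\mathbb N^{\mathbb N}:\sum_iu(i)=n,\ \sum_iu(i)/2^i=1\}$. *)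

(* with mathcomp-finmap and multinomials' monalg
   ({malg F[K]} = the F-vector space with basis K, i.e. finitely supported
   functions K -> F). *)
From HB Require Import structures.
From mathcomp Require Import all_boot all_order all_algebra all_fingroup.
From mathcomp Require Import finmap.
From mathcomp.multinomials Require Import monalg.

Set Implicit Arguments.
Unset Strict Implicit.
Unset Printing Implicit Defensive.

Import GRing.Theory.
Local Open Scope ring_scope.

(* [n] = {1..n} is modelled by 'I_n.                                        *)
Definition lprime (n : nat) (h : {ffun 'I_n -> nat}) : bool :=
  (\sum_(i < n) ((2 ^ h i)%N%:R)^-1 == 1 :> rat).

(* Basis of V = F x : a one-element set (unit), the basis vector being x.   *)
(* Basis of the graded piece  Lev(n) (x) V^{(x) n} inside the span of all    *)
(* pairs (h, t), h : [n] -> N, t : [n] -> {x}; the tensor product of spans  *)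
(* of sets is the span of the product set, and V^{(x) n} has basis          *)
(* {x}^n = {x (x) ... (x) x}.  The direct sum over n is the span of the     *)
(* disjoint union (tagged by n).                                            *)
Definition GBasis : choiceType :=
  {n : nat & ({ffun 'I_n -> nat} * {ffun 'I_n -> unit})%type}.

(* We let a family (s m : 'S_m)_m act, s m acting on the degree-m summand.  *)
Definition actB (s : forall m, 'S_m) (k : GBasis) : GBasis :=
  let: existT m hk := k in
  existT _ m ([ffun i => hk.1 (((s m)^-1)%g i)], [ffun i => hk.2 (((s m)^-1)%g i)]).

Definition actV (F : fieldType) (s : forall m, 'S_m) (p : {malg F[GBasis]})
  : {malg F[GBasis]} :=
  \sum_(k <- msupp p) << p@_k *g actB s k >>.

(* Gamma(Lev, F x) = (+)_{n>=1} (Lev(n) (x) (F x)^{(x) n})^{Sigma_n}: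
   elements lying in the span of L'(n) (x) {x}^n in each degree (Lev(0)=0
   automatically, as L'(0) is empty) and invariant under the symmetric
   group actions. *)
Definition GammaLev (F : fieldType) (p : {malg F[GBasis]}) : Prop :=
  (forall k, k \in msupp p -> lprime (tagged k).1) /\
  (forall s : forall m, 'S_m, actV s p = p).

(* Binary Huffman sequences: disjoint union over n >= 1 of the sets of    *)
(* u : N -> N with sum_i u(i) = n and sum_i u(i)/2^i = 1.  Such u has      *)
(* finite support, so we model it as a finitely supported function.        *)
Definition bhs_cond (n : nat) (u : {fsfun nat -> nat with 0%N}) : bool :=
  [&& (0 < n)%N,
      (\sum_(i <- finsupp u) u i)%N == n &
      (\sum_(i <- finsupp u) ((u i)%:R / (2 ^ i)%N%:R) == 1 :> rat)].

Definition BHS : choiceType :=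
  {n : nat & {u : {fsfun nat -> nat with 0%N} | bhs_cond n u}}.

From HB Require Import structures.
From mathcomp Require Import all_boot all_order all_algebra all_fingroup.
From mathcomp Require Import finmap.
From mathcomp.multinomials Require Import monalg.

Set Implicit Arguments.
Unset Strict Implicit.
Unset Printing Implicit Defensive.

Import GRing.Theory.
Local Open Scope ring_scope.

(* A Sigma_n-invariant vector in the span of L'(n) is determined by its
   coefficients at one representative of each Sigma_n-orbit, and these
   coefficients can be prescribed freely by taking orbit sums.  The orbit of
   h : [n] -> N is determined by its multiplicities u(i) = #h^-1(i), where
   sum_i u(i) = n and the Kraft equality sum_j 2^-h(j) = 1 reads
   sum_i u(i)/2^i = 1: the orbits in L'(n) are exactly the binary Huffman
   sequences of weight n. *)

Section Multiplicities.

Variable T : choiceType.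

Definition mult (s : seq T) : {fsfun T -> nat with 0%N} :=
  [fsfun x in [fset x | x in s]%fset => count_mem x s].

Lemma multE s x : mult s x = count_mem x s.
Proof.
rewrite fsfunE; case: ifPn => // x_notin_s.
by apply/esym/count_memPn; apply: contra x_notin_s => x_in_s; apply/imfsetP; exists x.
Qed.

Definition seq_of_mult (u : {fsfun T -> nat with 0%N}) : seq T :=
  flatten [seq nseq (u x) x | x <- finsupp u].

Lemma big_seq_of_mult (V : nmodType) u (G : T -> V) :
  \sum_(x <- seq_of_mult u) G x = \sum_(x <- finsupp u) G x *+ u x.
Proof.
rewrite big_flatten big_map; apply: eq_bigr => x _.
by rewrite big_nseq iter_addr_0.
Qed.

Lemma size_seq_of_mult u : size (seq_of_mult u) = (\sum_(x <- finsupp u) u x)%N.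
Proof.
rewrite size_flatten sumnE big_map big_map; apply: eq_bigr => x _.
by rewrite size_nseq.
Qed.

Lemma count_seq_of_mult u x : count_mem x (seq_of_mult u) = u x.
Proof.
rewrite count_flatten sumnE !big_map.
under eq_bigr do rewrite count_nseq.
case: (finsuppP u x) => [x_out | x_in].
  rewrite big1_seq // => y /andP[_ y_in] /=.
  by case: (eqVneq y x) => [yx|//]; rewrite -yx y_in in x_out.
rewrite (bigD1_seq x) ?fset_uniq //= eqxx mul1n big1 ?addn0 // => y.
by rewrite eq_sym => /negPf ->.
Qed.

Lemma mult_seq_of_mult u : mult (seq_of_mult u) = u.
Proof. by apply/fsfunP => x; rewrite multE count_seq_of_mult. Qed.

Lemma perm_seq_of_mult s : perm_eq (seq_of_mult (mult s)) s.
Proof. by apply/allP => x _ /=; rewrite count_seq_of_mult multE. Qed.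

Lemma multP s t : reflect (mult s = mult t) (perm_eq s t).
Proof.
apply: (iffP idP) => [/seq.permP st | st].
  by apply/fsfunP => x; rewrite !multE st.
by rewrite -(permPl (perm_seq_of_mult s)) st perm_seq_of_mult.
Qed.

Lemma perm_codomP n (h h' : {ffun 'I_n -> T}) :
  reflect (exists s : 'S_n, h = [ffun i => h' (s i)]) (perm_eq (codom h) (codom h')).
Proof.
have codom_tuple (g : {ffun 'I_n -> T}) : codom g = [tuple g i | i < n].
  by rewrite codomE.
rewrite !codom_tuple; apply: (iffP tuple_permP) => -[s hs]; exists s.
  apply/ffunP => i; move/val_inj/(congr1 (fun t : n.-tuple T => tnth t i)): hs.
  by rewrite !tnth_mktuple ffunE.
by rewrite hs /=; apply: eq_map => i; rewrite ffunE tnth_mktuple.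
Qed.

End Multiplicities.

Lemma bhs_cond_mult (s : seq nat) :
  bhs_cond (size s) (mult s) =
  (0 < size s)%N && (\sum_(x <- s) ((2 ^ x)%N%:R)^-1 == 1 :> rat).
Proof.
rewrite /bhs_cond -size_seq_of_mult (perm_size (perm_seq_of_mult s)) eqxx /=.
rewrite -(perm_big _ (perm_seq_of_mult s)) big_seq_of_mult /=.
by under eq_bigr do rewrite mulr_natl.
Qed.

Lemma lprime_codom n (h : {ffun 'I_n -> nat}) :
  lprime h = (\sum_(x <- codom h) ((2 ^ x)%N%:R)^-1 == 1 :> rat).
Proof. by rewrite /lprime codomE big_map big_enum. Qed.

Lemma bhs_cond_mult_codom n (h : {ffun 'I_n -> nat}) :
  bhs_cond n (mult (codom h)) = lprime h.
Proof.
have := bhs_cond_mult (codom h); rewrite size_codom card_ord => ->.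
rewrite lprime_codom; case: n h => [|n] h //=.
by rewrite codomE enum_ord0 big_nil eq_sym oner_eq0.
Qed.

Definition perm_fam n (s : 'S_n) : forall m, 'S_m :=
  fun m => if n =P m is ReflectT e then cast_perm e s else 1%g.

Lemma perm_fam_id n (s : 'S_n) : perm_fam s n = s.
Proof.
by rewrite /perm_fam; case: eqP => // e; rewrite eq_axiomK cast_perm_id.
Qed.

Definition inv_fam (s : forall m, 'S_m) : forall m, 'S_m := fun m => ((s m)^-1)%g.

Lemma actBK s : cancel (actB s) (actB (inv_fam s)).
Proof.
by case=> m [h t]; congr existT; congr pair; apply/ffunP => i;
  rewrite !ffunE invgK permK.
Qed.

Lemma actBKV s : cancel (actB (inv_fam s)) (actB s).
Proof.
by case=> m [h t]; congr existT; congr pair; apply/ffunP => i;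
  rewrite !ffunE invgK permKV.
Qed.

Lemma mcoeff_sum_relabel (K K' : choiceType) (G : zmodType) (f : K -> K')
    (p : {malg G[K]}) k :
  injective f -> (\sum_(k0 <- msupp p) << p@_k0 *g f k0 >>)@_(f k) = p@_k.
Proof.
move=> f_inj; rewrite [in RHS](monalgE p) !raddf_sum; apply: eq_bigr => k0 _.
by rewrite /= !mcoeffU (inj_eq f_inj).
Qed.

Section Invariants.

Variable F : fieldType.

Lemma mcoeff_actV s (p : {malg F[GBasis]}) k : (actV s p)@_(actB s k) = p@_k.
Proof. exact/mcoeff_sum_relabel/can_inj/actBK. Qed.

Lemma actV_fixedP (p : {malg F[GBasis]}) :
  (forall s, actV s p = p) <-> (forall s k, p@_(actB s k) = p@_k).
Proof.
split=> [fixed s k | inv s]; first by rewrite -{1}(fixed s) mcoeff_actV.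
by apply/malgP => k; rewrite -{1}(actBKV s k) mcoeff_actV inv.
Qed.

End Invariants.

Definition bhs_rep (b : BHS) : GBasis :=
  existT _ (tag b)
    ([ffun i : 'I_(tag b) => nth 0%N (seq_of_mult (val (tagged b))) i], [ffun=> tt]).

Lemma codom_bhs_rep b : codom (tagged (bhs_rep b)).1 = seq_of_mult (val (tagged b)).
Proof.
case: b => n [u /and3P[_ /eqP size_u _]] /=.
rewrite codomE (eq_map (ffunE _)) (map_comp (nth 0%N _) val) val_enum_ord.
by rewrite -size_u -size_seq_of_mult -/(mkseq _ _) mkseq_nth.
Qed.

Definition bhs_of (k : GBasis) : option BHS :=
  omap (fun u : {u | bhs_cond (tag k) u} => existT _ (tag k) u : BHS)
    (insub (mult (codom (tagged k).1))).

Lemma bhs_of_rep b : bhs_of (bhs_rep b) = Some b.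
Proof.
rewrite /bhs_of codom_bhs_rep mult_seq_of_mult.
by case: b => n [u bhs_u] /=; rewrite insubT.
Qed.

Lemma isSome_bhs_of k : isSome (bhs_of k) = lprime (tagged k).1.
Proof. by rewrite /bhs_of -bhs_cond_mult_codom; case: insubP => [u ->|/negPf ->]. Qed.

Lemma bhs_of_actB s k : bhs_of (actB s k) = bhs_of k.
Proof.
case: k => n [h t]; rewrite /bhs_of /=.
have /multP -> // : perm_eq (codom [ffun i => h ((s n)^-1 i)%g]) (codom h).
by apply/perm_codomP; exists (s n)^-1%g.
Qed.

Lemma bhs_of_orbit k b :
  bhs_of k = Some b -> exists s : 'S_(tag b), k = actB (perm_fam s) (bhs_rep b).
Proof.
case: k => n [h t]; rewrite /bhs_of /=; case: insubP => //= u _ mult_h [<-] {b}.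
have /perm_codomP[s ->] : perm_eq (codom h) (codom (tagged (bhs_rep (existT _ n u))).1).
  by apply/multP; rewrite codom_bhs_rep mult_seq_of_mult /= mult_h.
exists s^-1%g; rewrite /actB /= perm_fam_id invgK.
suff -> : t = [ffun i => [ffun=> tt] (s i)] by [].
by apply/ffunP => i; rewrite !ffunE; case: (t i).
Qed.

Definition orbit (b : BHS) : {fset GBasis} :=
  [fset actB (perm_fam s) (bhs_rep b) | s : 'S_(tag b)]%fset.

Lemma mem_orbit k b : bhs_of k = Some b -> k \in orbit b.
Proof. by move=> /bhs_of_orbit[s ->]; apply/imfsetP; exists s. Qed.

Section HuffmanCoordinates.

Variable F : fieldType.

Definition rep_coords (p : {malg F[GBasis]}) : {malg F[BHS]} :=
  [malg b in [fset b | b in pmap bhs_of (msupp p)]%fset => p@_(bhs_rep b)].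

Lemma mcoeff_rep_coords p b : (rep_coords p)@_b = p@_(bhs_rep b).
Proof.
rewrite mcoeffE; case: ifPn => // b_out; apply/esym/mcoeff_outdom.
apply: contra b_out => rep_in; apply/imfsetP; exists b => //=.
by rewrite mem_pmap; apply/mapP; exists (bhs_rep b); rewrite ?bhs_of_rep.
Qed.

Lemma rep_coords_is_linear : linear rep_coords.
Proof.
by move=> a p q; apply/malgP => b; rewrite !(mcoeffD, mcoeffZ, mcoeff_rep_coords).
Qed.

HB.instance Definition _ :=
  GRing.isLinear.Build F {malg F[GBasis]} {malg F[BHS]} _ rep_coords
    rep_coords_is_linear.

Definition orbit_sum (y : {malg F[BHS]}) : {malg F[GBasis]} :=
  [malg k in (\bigcup_(b <- msupp y) orbit b)%fset => oapp (mcoeff^~ y) 0 (bhs_of k)].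

Lemma mcoeff_orbit_sum y k : (orbit_sum y)@_k = oapp (mcoeff^~ y) 0 (bhs_of k).
Proof.
rewrite mcoeffE; case: ifPn => // k_out.
case bhs_k: (bhs_of k) => [b|] //=; apply/esym/mcoeff_outdom.
apply: contra k_out => b_in; apply/bigfcupP; exists b; rewrite ?andbT //.
exact: mem_orbit.
Qed.

Lemma GammaLev_orbit_sum y : GammaLev (orbit_sum y).
Proof.
split=> [k | ].
  rewrite -mcoeff_neq0 mcoeff_orbit_sum -isSome_bhs_of.
  by case: (bhs_of k) => //; rewrite eqxx.
by apply/actV_fixedP => s k; rewrite !mcoeff_orbit_sum bhs_of_actB.
Qed.

Lemma orbit_sumK y : rep_coords (orbit_sum y) = y.
Proof.
by apply/malgP => b; rewrite mcoeff_rep_coords mcoeff_orbit_sum bhs_of_rep.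
Qed.

Lemma rep_coordsK p : GammaLev p -> orbit_sum (rep_coords p) = p.
Proof.
case=> supp_p /actV_fixedP inv_p; apply/malgP => k; rewrite mcoeff_orbit_sum.
case bhs_k: (bhs_of k) => [b|] /=.
  by have [s ->] := bhs_of_orbit bhs_k; rewrite inv_p mcoeff_rep_coords.
apply/esym/mcoeff_outdom; apply: contraT => /negPn /supp_p.
by rewrite -isSome_bhs_of bhs_k.
Qed.

End HuffmanCoordinates.

Theorem corollary6p8 (F : fieldType) :
  exists f : {linear {malg F[GBasis]} -> {malg F[BHS]}},
    (forall p q, GammaLev p -> GammaLev q -> f p = f q -> p = q) /\
    (forall y : {malg F[BHS]}, exists p, GammaLev p /\ f p = y).
Proof.
exists (@rep_coords F); split.
  move=> p q /rep_coordsK p_id /rep_coordsK q_id pq.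
  by rewrite -p_id -q_id pq.
by move=> y; exists (orbit_sum y); split; [exact: GammaLev_orbit_sum | exact: orbit_sumK].
Qed.
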